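(* Let $n$ be a non-negative integer. Then \[ \sum_{k=0}^{n}(-1)^k\binom{n}{k}2^{-2k}\binom{2k}{k}H_k^{(2)}=\binom{2n}{n}2^{-2n}H_n^{(2)}-\sum_{k=0}^{n-1}\frac{H_n-H_k}{n-k}\binom{2k}{k}2^{-2k}, \] and, more generally, for all complex numbers $u,v$ with $\Re u>-1$ and $\Re v>-1$, \[ \begin{aligned} &\sum_{k=0}^{n}(-1)^k\binom{n}{k}2^{-2k}\binom{2k+v}{(2k+v)/2}\binom{(2k+u+v)/2}{u/2}^{-1}H_k^{(2)}\\ &\quad=\binom{v}{v/2}\binom{u}{u/2}^{-1}\binom{2n+u}{(2n+u)/2}\binom{(2n+u+v)/2}{v/2}^{-1}2^{-2n}H_n^{(2)}\\ &\qquad-\binom{v}{v/2}\binom{u}{u/2}^{-1}\sum_{k=0}^{n-1}\frac{H_n-H_k}{n-k}\binom{2k+u}{(2k+u)/2}2^{-2k}\binom{(2k+u+v)/2}{v/2}^{-1}. \end{aligned} \]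
   Context: For integers $m\ge0$, $H_m=\sum_{j=1}^m 1/j$ and $H_m^{(2)}=\sum_{j=1}^m 1/j^2$. Binomial coefficients with complex entries: $\binom{x}{y}=\frac{\Gamma(x+1)}{\Gamma(y+1)\Gamma(x-y+1)}$. *)

From Stdlib Require Import Reals List Factorial.
From Coquelicot Require Import Coquelicot.

Definition rsum (f : nat -> R) (m : nat) : R :=
  fold_right (fun k acc => (f k + acc)%R) 0%R (seq 0 m).
Definition csum (f : nat -> C) (m : nat) : C :=
  fold_right (fun k acc => (f k + acc)%C) (RtoC 0) (seq 0 m).
Definition cprod (f : nat -> C) (m : nat) : C :=
  fold_right (fun k acc => (f k * acc)%C) (RtoC 1) (seq 0 m).

Definition H (m : nat) : R := rsum (fun j => / INR (S j)) m.
Definition H2 (m : nat) : R := rsum (fun j => / (INR (S j) ^ 2)) m.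

(* a^z = exp(z ln a) for a real a > 0 and complex z *)
Definition cpow (a : R) (z : C) : C :=
  (RtoC (exp (Re z * ln a)) * (cos (Im z * ln a), sin (Im z * ln a)))%C.

(* Euler's Gamma function via Gauss' limit formula
   Gamma z = lim_{n->oo} n! n^z / (z (z+1) ... (z+n)),
   valid for z not a non-positive integer (the limit is taken separately
   on real and imaginary parts). *)
Definition gauss_seq (z : C) (n : nat) : C :=
  (RtoC (INR (fact n)) * cpow (INR n) z
   / cprod (fun j => z + RtoC (INR j)) (S n))%C.
Definition CGamma (z : C) : C :=
  (real (Lim_seq (fun n => Re (gauss_seq z n))),
   real (Lim_seq (fun n => Im (gauss_seq z n)))).

Definition cbinom (x y : C) : C :=
  (CGamma (x + 1) / (CGamma (y + 1) * CGamma (x - y + 1)))%C.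

(* Both identities are instances of one inversion formula for the binomial transform
   (Δb)_k = Σ_i (-1)^i C(k,i) b_i, namely
     Σ_k (-1)^k C(n,k) (Δb)_k H2_k = b_n H2_n - Σ_{k<n} (H_n - H_k) / (n - k) b_k.
   Exchanging the two sums reduces it to the finite differences of H2, which have the
   closed form Σ_m (-1)^m C(M,m) H2_{j+m} = -(H_{j+M} - H_j) / (M C(j+M, j)) for M > 0.
   By Chu-Vandermonde, the binomial transform of (g)_k / (b)_k is (b-g)_k / (b)_k.
   Since C(2k,k) / 4^k = (1/2)_k / (1)_k, which is its own transform, the first identity
   follows. For the second, Γ(z+k) = (z)_k Γ(z) and (w)_(2k) = 4^k (w/2)_k ((w+1)/2)_k
   show that each quotient of Gamma-binomials, divided by 4^k, is its value at k = 0
   times ((x+1)/2)_k / ((x+y)/2+1)_k; the inversion formula then applies to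
   b_k = ((u+1)/2)_k / ((u+v)/2+1)_k, whose transform is ((v+1)/2)_k / ((u+v)/2+1)_k.
   The properties of the Gauss-limit Gamma used here (Γ(z+1) = z Γ(z) and Γ(z) <> 0
   for Re z > 0) follow from the convergence of Gauss' sequence g_n to a nonzero
   limit, a consequence of the ratio estimate g_(n+1) / g_n = 1 + O(1/n^2). *)

From Stdlib Require Import Reals List Factorial Lia Lra.
From Coquelicot Require Import Coquelicot.

Open Scope R_scope.

Lemma Cdiv_neq0 (a b : C) : a <> 0%C -> b <> 0%C -> (a / b)%C <> 0%C.
Proof.
  intros Ha Hb E. apply Ha. replace a with (a / b * b)%C by (field; exact Hb).
  rewrite E. ring.
Qed.

Lemma Cmult_div_assoc (a b c : C) : (a * b / c = a * (b / c))%C.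
Proof. unfold Cdiv. ring. Qed.

Lemma Cmult_mult_div_assoc (a b c d : C) : (a * b * c / d = a * (b / d * c))%C.
Proof. unfold Cdiv. ring. Qed.

Lemma Cplus_INR_neq0 (z : C) (j : nat) : 0 < Re z -> (z + INR j)%C <> 0%C.
Proof.
  intros Hz E. apply (f_equal Re) in E. pose proof (pos_INR j).
  unfold Re in *. simpl in E. lra.
Qed.

Lemma re_div2 (a : C) : Re (a / 2) = Re a / 2.
Proof. destruct a as [x y]. unfold Re, Cdiv, Cinv, Cmult. simpl. field. Qed.

Ltac re_lra := rewrite ?re_plus, ?re_div2, ?re_plus, ?re_RtoC; lra.

Lemma im_le_Cmod (c : C) : Rabs (Im c) <= Cmod c.
Proof.
  pose proof (Cmod2_alt c) as Hc. pose proof (Cmod_ge_0 c). pose proof (Rabs_pos (Im c)).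
  rewrite <- (pow2_abs (Im c)) in Hc. pose proof (pow2_ge_0 (Re c)). nra.
Qed.

Lemma Cmod_le_Re_Im (c : C) : Cmod c <= Rabs (Re c) + Rabs (Im c).
Proof.
  destruct c as [x y]. unfold Re, Im. simpl.
  replace (x, y) with (RtoC x + RtoC y * Ci)%C
    by (apply injective_projections; simpl; ring).
  eapply Rle_trans; [apply Cmod_triangle|].
  rewrite Cmod_mult, Cmod_Ci, !Cmod_R. lra.
Qed.

Lemma csum_S (f : nat -> C) m : csum f (S m) = (csum f m + f m)%C.
Proof.
  unfold csum. rewrite seq_S, fold_right_app. simpl.
  assert (Hacc : forall l a, fold_right (fun k acc => (f k + acc)%C) a l
                             = (fold_right (fun k acc => (f k + acc)%C) 0 l + a)%C).
  { induction l as [|x l IH]; intros a; simpl; [ring | rewrite IH; ring]. }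
  rewrite Hacc. ring.
Qed.

Lemma rsum_S (f : nat -> R) m : rsum f (S m) = rsum f m + f m.
Proof.
  unfold rsum. rewrite seq_S, fold_right_app. simpl.
  assert (Hacc : forall l a, fold_right (fun k acc => f k + acc) a l
                             = fold_right (fun k acc => f k + acc) 0 l + a).
  { induction l as [|x l IH]; intros a; simpl; [ring | rewrite IH; ring]. }
  rewrite Hacc. ring.
Qed.

Lemma RtoC_rsum (f : nat -> R) m : RtoC (rsum f m) = csum (fun k => RtoC (f k)) m.
Proof.
  induction m as [|m IH]; [reflexivity|].
  rewrite rsum_S, csum_S, <- IH. apply RtoC_plus.
Qed.

Lemma csum_0 (f : nat -> C) : csum f 0 = 0%C.
Proof. reflexivity. Qed.

Lemma csum_ext (f g : nat -> C) m :
  (forall k, (k < m)%nat -> f k = g k) -> csum f m = csum g m.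
Proof.
  induction m as [|m IH]; intros Hfg; [reflexivity|].
  rewrite !csum_S, IH, Hfg; auto.
Qed.

Lemma csum_zero (f : nat -> C) m : (forall k, (k < m)%nat -> f k = 0%C) -> csum f m = 0%C.
Proof.
  induction m as [|m IH]; intros Hf; [reflexivity|].
  rewrite csum_S, IH, Hf; auto. ring.
Qed.

Lemma csum_plus (f g : nat -> C) m : csum (fun k => f k + g k)%C m = (csum f m + csum g m)%C.
Proof. induction m as [|m IH]; [rewrite !csum_0; ring|]. rewrite !csum_S, IH. ring. Qed.

Lemma csum_opp (f : nat -> C) m : csum (fun k => - f k)%C m = (- csum f m)%C.
Proof. induction m as [|m IH]; [rewrite !csum_0; ring|]. rewrite !csum_S, IH. ring. Qed.

Lemma csum_mult_l (c : C) (f : nat -> C) m : csum (fun k => c * f k)%C m = (c * csum f m)%C.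
Proof. induction m as [|m IH]; [rewrite !csum_0; ring|]. rewrite !csum_S, IH. ring. Qed.

Lemma csum_mult_r (c : C) (f : nat -> C) m : csum (fun k => f k * c)%C m = (csum f m * c)%C.
Proof. induction m as [|m IH]; [rewrite !csum_0; ring|]. rewrite !csum_S, IH. ring. Qed.

Lemma csum_add (f : nat -> C) i m :
  csum f (i + m) = (csum f i + csum (fun k => f (i + k)%nat) m)%C.
Proof.
  induction m as [|m IH]; [rewrite Nat.add_0_r, csum_0; ring|].
  rewrite Nat.add_succ_r, !csum_S, IH. ring.
Qed.

Lemma csum_trunc (f : nat -> C) m m' : (m <= m')%nat ->
  (forall k, (m <= k)%nat -> (k < m')%nat -> f k = 0%C) -> csum f m' = csum f m.
Proof.
  intros Hm Hf. replace m' with (m + (m' - m))%nat by lia.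
  rewrite csum_add, (csum_zero (fun k => f (m + k)%nat)); [ring|].
  intros k Hk. apply Hf; lia.
Qed.

Lemma csum_shift (f : nat -> C) m : csum f (S m) = (f O + csum (fun k => f (S k)) m)%C.
Proof.
  change (S m) with (1 + m)%nat. rewrite csum_add, csum_S, csum_0, Cplus_0_l.
  reflexivity.
Qed.

Lemma csum_swap (F : nat -> nat -> C) m1 m2 :
  csum (fun i => csum (fun j => F i j) m2) m1 = csum (fun j => csum (fun i => F i j) m1) m2.
Proof.
  induction m1 as [|m1 IH]; simpl.
  - symmetry. apply csum_zero. reflexivity.
  - rewrite csum_S, IH, <- csum_plus. apply csum_ext. intros. now rewrite csum_S.
Qed.

(** * The binomial transform *)

(* Unlike [Binomial.C n k], a factorial quotient for every [k], [binom n k] vanishes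
   for [k > n]. *)
Definition binom (n k : nat) : R := if Nat.leb k n then Binomial.C n k else 0.

Lemma binom_C n k : (k <= n)%nat -> binom n k = Binomial.C n k.
Proof. intros Hk. unfold binom. now rewrite (proj2 (Nat.leb_le k n) Hk). Qed.

Lemma binom_gt n k : (n < k)%nat -> binom n k = 0.
Proof. intros Hk. unfold binom. now rewrite (proj2 (Nat.leb_gt k n) Hk). Qed.

Lemma Binomial_C_nn n : Binomial.C n n = 1.
Proof.
  unfold Binomial.C. rewrite Nat.sub_diag. simpl. field. apply INR_fact_neq_0.
Qed.

Lemma binom_n0 n : binom n 0 = 1.
Proof.
  rewrite binom_C by lia. unfold Binomial.C. rewrite Nat.sub_0_r. simpl.
  field. apply INR_fact_neq_0.
Qed.

Lemma binom_pascal n k : binom (S n) (S k) = binom n k + binom n (S k).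
Proof.
  destruct (Nat.lt_trichotomy k n) as [Hlt | [Heq | Hgt]]; [| subst n |].
  - rewrite !binom_C by lia. now rewrite pascal.
  - rewrite (binom_gt k (S k)), !binom_C, !Binomial_C_nn by lia. ring.
  - rewrite !binom_gt by lia. ring.
Qed.

Lemma binom_mul n i m : (i <= n)%nat ->
  binom n (i + m) * binom (i + m) i = binom n i * binom (n - i) m.
Proof.
  intros Hi. destruct (Compare_dec.le_lt_dec (i + m) n) as [Hle | Hlt].
  - rewrite !binom_C by lia. unfold Binomial.C.
    replace (i + m - i)%nat with m by lia.
    replace (n - i - m)%nat with (n - (i + m))%nat by lia.
    pose proof (INR_fact_neq_0 i). pose proof (INR_fact_neq_0 m).
    pose proof (INR_fact_neq_0 (i + m)). pose proof (INR_fact_neq_0 (n - i)).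
    pose proof (INR_fact_neq_0 (n - (i + m))).
    field. auto.
  - rewrite (binom_gt n), (binom_gt (n - i)) by lia. ring.
Qed.

Definition btransform (b : nat -> C) (k : nat) : C :=
  csum (fun i => RtoC ((-1) ^ i * binom k i) * b i)%C (S k).

Lemma btransform_0 b : btransform b 0 = b O.
Proof. unfold btransform. rewrite csum_S, csum_0, binom_n0, pow_O, Rmult_1_l. ring. Qed.

Lemma btransform_mult_l c b k :
  btransform (fun i => c * b i)%C k = (c * btransform b k)%C.
Proof.
  unfold btransform. rewrite <- csum_mult_l. apply csum_ext. intros. ring.
Qed.

Lemma RtoC_alt_S i x : RtoC ((-1) ^ S i * x) = (- RtoC ((-1) ^ i * x))%C.
Proof. rewrite <- RtoC_opp. f_equal. simpl. ring. Qed.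

Lemma btransform_S b k :
  btransform b (S k) = (btransform b k - btransform (fun i => b (S i)) k)%C.
Proof.
  unfold btransform.
  set (t := fun i => (RtoC ((-1) ^ i * binom k (S i)) * b (S i))%C).
  assert (Hk : csum (fun i => RtoC ((-1) ^ i * binom k i) * b i)%C (S k)
               = (b O - csum t (S k))%C).
  { rewrite <- (csum_trunc _ (S k) (S (S k))); [| lia |].
    - rewrite csum_shift, binom_n0, pow_O, Rmult_1_l, Cmult_1_l.
      unfold Cminus. rewrite <- csum_opp. f_equal.
      apply csum_ext. intros i _. unfold t. rewrite RtoC_alt_S. ring.
    - intros j Hj1 Hj2. replace j with (S k) by lia.
      rewrite binom_gt by lia. rewrite Rmult_0_r. apply Cmult_0_l. }
  rewrite Hk, csum_shift, binom_n0, pow_O, Rmult_1_l, Cmult_1_l.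
  rewrite (csum_ext _ (fun i => - (RtoC ((-1) ^ i * binom k i) * b (S i)) + - t i)%C).
  - rewrite csum_plus, !csum_opp. ring.
  - intros i _. unfold t. rewrite binom_pascal, Rmult_plus_distr_l, RtoC_plus, !RtoC_alt_S.
    ring.
Qed.

Lemma btransform_ext b b' k :
  (forall i, (i <= k)%nat -> b i = b' i) -> btransform b k = btransform b' k.
Proof.
  intros Hb. unfold btransform. apply csum_ext. intros i Hi. rewrite Hb by lia. reflexivity.
Qed.

Fixpoint poch (z : C) (k : nat) : C :=
  match k with
  | O => 1%C
  | S k => (poch z k * (z + INR k))%C
  end.

Lemma poch_S z k : poch z (S k) = (poch z k * (z + INR k))%C.
Proof. reflexivity. Qed.

Lemma poch_Sl z k : poch z (S k) = (z * poch (z + 1) k)%C.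
Proof.
  induction k as [|k IH]; [simpl; ring|].
  rewrite poch_S, IH, (poch_S (z + 1)), S_INR, RtoC_plus. ring.
Qed.

Lemma poch_neq0 z k : (forall j : nat, (z + INR j)%C <> 0%C) -> poch z k <> 0%C.
Proof.
  intros Hz. induction k as [|k IH]; [apply C1_nz|].
  rewrite poch_S. now apply Cmult_neq_0.
Qed.

Lemma btransform_poch_ratio g b k : (forall j : nat, (b + INR j)%C <> 0%C) ->
  btransform (fun i => poch g i / poch b i)%C k = (poch (b - g) k / poch b k)%C.
Proof.
  revert g b. induction k as [|k IH]; intros g b Hb.
  - rewrite btransform_0. reflexivity.
  - assert (Hb0 : b <> 0%C) by (specialize (Hb O); now rewrite Cplus_0_r in Hb).
    assert (Hb1 : forall j : nat, (b + 1 + INR j)%C <> 0%C).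
    { intros j. rewrite <- Cplus_assoc, <- RtoC_plus, Rplus_comm, <- S_INR. apply Hb. }
    assert (Hbk : poch b k <> 0%C) by now apply poch_neq0.
    assert (Hshift : poch (b + 1) k = (poch b k * (b + INR k) / b)%C).
    { rewrite <- poch_S, poch_Sl. field. exact Hb0. }
    rewrite btransform_S. cbv beta.
    rewrite (btransform_ext (fun i => poch g (S i) / poch b (S i))%C
                            (fun i => g / b * (poch (g + 1) i / poch (b + 1) i))%C).
    2:{ intros i _. rewrite !poch_Sl. field. split; [now apply poch_neq0 | exact Hb0]. }
    rewrite btransform_mult_l, !IH by assumption.
    replace (b + 1 - (g + 1))%C with (b - g)%C by ring.
    rewrite Hshift, !poch_S. field. repeat split; auto.
Qed.

Lemma central_binom_poch k :
  RtoC (Binomial.C (2 * k) k * / 2 ^ (2 * k)) = (poch (1 / 2) k / poch 1 k)%C.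
Proof.
  assert (H1 : forall j : nat, (1 + INR j)%C <> 0%C)
    by (intros j; apply Cplus_INR_neq0; simpl; lra).
  induction k as [|k IH].
  - change (2 * 0)%nat with 0%nat.
    rewrite Binomial_C_nn, pow_O, Rinv_1, Rmult_1_l. simpl poch. field.
  - assert (Hrec : Binomial.C (2 * S k) (S k) * / 2 ^ (2 * S k)
                   = Binomial.C (2 * k) k * / 2 ^ (2 * k) * ((1 / 2 + INR k) / (1 + INR k))).
    { unfold Binomial.C.
      replace (2 * S k - S k)%nat with (S k) by lia. replace (2 * k - k)%nat with k by lia.
      replace (2 * S k)%nat with (S (S (2 * k))) by lia.
      rewrite !fact_simpl, !mult_INR, !S_INR, mult_INR.
      change (2 ^ S (S (2 * k))) with (2 * (2 * 2 ^ (2 * k))).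
      pose proof (INR_fact_neq_0 k). pose proof (INR_fact_neq_0 (2 * k)). pose proof (pos_INR k).
      assert (2 ^ (2 * k) <> 0) by (apply pow_nonzero; lra).
      simpl (INR 2). field. lra. }
    rewrite Hrec, RtoC_mult, IH, !poch_S, RtoC_div, !RtoC_plus by (pose proof (pos_INR k); lra).
    pose proof (poch_neq0 1 k H1) as Hp. pose proof (H1 k) as Hk.
    rewrite (RtoC_div 1 2) by lra. field. split; assumption.
Qed.

Lemma btransform_central_binom k :
  btransform (fun i => RtoC (Binomial.C (2 * i) i * / 2 ^ (2 * i))) k
  = RtoC (Binomial.C (2 * k) k * / 2 ^ (2 * k)).
Proof.
  rewrite (btransform_ext _ (fun i => poch (1 / 2) i / poch 1 i)%C)
    by (intros; apply central_binom_poch).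
  rewrite btransform_poch_ratio, central_binom_poch.
  - f_equal. f_equal. field.
  - intros j. apply Cplus_INR_neq0. simpl. lra.
Qed.

Lemma H_S m : H (S m) = H m + / INR (S m).
Proof. apply rsum_S. Qed.

Lemma H2_S m : H2 (S m) = H2 m + / INR (S m) ^ 2.
Proof. apply rsum_S. Qed.

Lemma btransform_H2 j M :
  btransform (fun m => RtoC (H2 (j + m))) (S M)
  = RtoC (- (H (j + S M) - H j) / (INR (S M) * Binomial.C (j + S M) j)).
Proof.
  revert j. induction M as [|M IH]; intros j.
  - rewrite btransform_S, !btransform_0, <- RtoC_minus. f_equal.
    rewrite !Nat.add_0_r, Nat.add_1_r, H_S, H2_S. unfold Binomial.C.
    replace (S j - j)%nat with 1%nat by lia.
    rewrite fact_simpl, mult_INR. simpl (fact 1).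
    pose proof (INR_fact_neq_0 j) as Hj. pose proof (lt_0_INR (S j) ltac:(lia)) as HSj.
    simpl (INR 1). field. lra.
  - rewrite btransform_S, IH. cbv beta.
    rewrite (btransform_ext _ (fun m => RtoC (H2 (S j + m))))
      by (intros; now rewrite Nat.add_succ_comm).
    rewrite IH, <- RtoC_minus. f_equal.
    replace (S j + S M)%nat with (S (j + S M)) by lia.
    replace (j + S (S M))%nat with (S (j + S M)) by lia.
    rewrite !H_S. unfold Binomial.C.
    replace (j + S M - j)%nat with (S M) by lia.
    replace (S (j + S M) - S j)%nat with (S M) by lia.
    replace (S (j + S M) - j)%nat with (S (S M)) by lia.
    rewrite !(fact_simpl (j + S M)), (fact_simpl j), (fact_simpl (S M)), !mult_INR.
    pose proof (INR_fact_neq_0 j). pose proof (INR_fact_neq_0 (S M)).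
    pose proof (INR_fact_neq_0 (j + S M)).
    rewrite !S_INR, plus_INR, S_INR.
    pose proof (pos_INR j). pose proof (pos_INR M).
    field. repeat split; lra.
Qed.

Lemma csum_binom_binom (a : nat -> C) n i : (i <= n)%nat ->
  csum (fun k => RtoC ((-1) ^ k * binom n k * binom k i) * a k)%C (S n)
  = (RtoC ((-1) ^ i * binom n i) * btransform (fun m => a (i + m)%nat) (n - i))%C.
Proof.
  intros Hi. replace (S n) with (i + S (n - i))%nat by lia.
  rewrite csum_add, csum_zero, Cplus_0_l.
  - unfold btransform. rewrite <- csum_mult_l. apply csum_ext. intros m _.
    rewrite Cmult_assoc, <- RtoC_mult. f_equal. f_equal.
    rewrite pow_add.
    transitivity ((-1) ^ i * (-1) ^ m * (binom n (i + m) * binom (i + m) i)); [ring|].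
    rewrite binom_mul by exact Hi. ring.
  - intros k Hk. rewrite (binom_gt k i) by exact Hk. rewrite Rmult_0_r. apply Cmult_0_l.
Qed.

Lemma binom_btransform_H2 n i : (i < n)%nat ->
  (RtoC (binom n i) * btransform (fun m => RtoC (H2 (i + m))) (n - i))%C
  = RtoC (- ((H n - H i) / (INR n - INR i))).
Proof.
  intros Hi. destruct (n - i)%nat as [|M] eqn:HM; [lia|].
  rewrite btransform_H2, <- RtoC_mult. f_equal.
  replace (i + S M)%nat with n by lia.
  replace (INR (S M)) with (INR n - INR i) by (rewrite <- HM, minus_INR by lia; reflexivity).
  assert (Hn : INR n - INR i <> 0) by (rewrite <- minus_INR, HM by lia; apply not_0_INR; lia).
  assert (HC : Binomial.C n i <> 0).
  { unfold Binomial.C. pose proof (INR_fact_neq_0 n). pose proof (INR_fact_neq_0 i).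
    pose proof (INR_fact_neq_0 (n - i)).
    apply Rmult_integral_contrapositive. split; [assumption|].
    apply Rinv_neq_0_compat, Rmult_integral_contrapositive. split; assumption. }
  rewrite binom_C by lia. field. split; assumption.
Qed.

Lemma btransform_H2_sum (b : nat -> C) n :
  csum (fun k => RtoC ((-1) ^ k * binom n k) * btransform b k * RtoC (H2 k))%C (S n)
  = (b n * RtoC (H2 n)
     - csum (fun k => RtoC ((H n - H k) / (INR n - INR k)) * b k) n)%C.
Proof.
  (* After exchanging the sums, the coefficient of [b i] is [binom n i] times the
     [(n - i)]-th difference of [H2] at [i]. *)
  transitivity (csum (fun i => RtoC (binom n i)
                             * btransform (fun m => RtoC (H2 (i + m))) (n - i) * b i)%C (S n)).
  - rewrite (csum_ext _ (fun k => csum (fun i =>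
        RtoC ((-1) ^ k * binom n k * binom k i) * RtoC (H2 k) * (RtoC ((-1) ^ i) * b i)) (S n)))%C.
    + rewrite csum_swap. apply csum_ext. intros i Hi.
      rewrite csum_mult_r, csum_binom_binom by lia.
      replace (RtoC (binom n i)) with (RtoC ((-1) ^ i * binom n i) * RtoC ((-1) ^ i))%C;
        [ring|].
      rewrite <- RtoC_mult. f_equal.
      rewrite Rmult_comm, <- Rmult_assoc, <- Rpow_mult_distr.
      replace (-1 * -1) with 1 by ring. rewrite pow1. ring.
    + intros k Hk. unfold btransform.
      rewrite <- (csum_trunc _ (S k) (S n)) by (lia || (intros i Hi1 Hi2;
        rewrite (binom_gt k i), Rmult_0_r by lia; apply Cmult_0_l)).
      rewrite <- csum_mult_l, <- csum_mult_r. apply csum_ext. intros i _.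
      rewrite !RtoC_mult. ring.
  - rewrite csum_S, Nat.sub_diag, btransform_0, Nat.add_0_r, binom_C, Binomial_C_nn by lia.
    unfold Cminus. rewrite <- csum_opp, Cplus_comm. f_equal; [ring|].
    apply csum_ext. intros k Hk. rewrite binom_btransform_H2 by exact Hk.
    rewrite RtoC_opp. ring.
Qed.

Lemma alt_sum_central_binom_H2 n :
  rsum (fun k => (-1) ^ k * Binomial.C n k * / 2 ^ (2 * k)
                   * Binomial.C (2 * k) k * H2 k)%R (S n)
  = (Binomial.C (2 * n) n * / 2 ^ (2 * n) * H2 n
     - rsum (fun k => (H n - H k) / (INR n - INR k)
                        * Binomial.C (2 * k) k * / 2 ^ (2 * k))%R n)%R.
Proof.
  set (c := fun k => RtoC (Binomial.C (2 * k) k * / 2 ^ (2 * k))).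
  apply RtoC_inj. rewrite RtoC_minus, !RtoC_rsum.
  rewrite (csum_ext _ (fun k => RtoC ((-1) ^ k * binom n k) * btransform c k * RtoC (H2 k))%C).
  - rewrite btransform_H2_sum. unfold c. rewrite <- RtoC_mult. f_equal.
    apply csum_ext. intros k _. rewrite <- RtoC_mult. f_equal. ring.
  - intros k Hk. unfold c. rewrite btransform_central_binom, binom_C by lia.
    rewrite <- !RtoC_mult. f_equal. ring.
Qed.

Lemma exp_taylor1 x : Rabs x <= 1 / 2 -> 0 <= exp x - 1 - x <= 2 * x ^ 2.
Proof.
  intros Hx. apply Rabs_le_between in Hx.
  pose proof (exp_ineq1_le x) as Hlow. pose proof (exp_ineq1_le (- x)) as Hneg.
  rewrite exp_Ropp in Hneg. pose proof (exp_pos x) as Hpos.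
  assert (Hinv : exp x * (1 - x) <= 1).
  { apply (Rmult_le_compat_l (exp x)) in Hneg; [|lra].
    rewrite Rinv_r in Hneg by lra. lra. }
  split; nra.
Qed.

Lemma sin_taylor1 y : Rabs y <= 1 -> Rabs (sin y - y) <= y ^ 2.
Proof.
  assert (Hpos : forall t, 0 <= t <= 1 -> Rabs (sin t - t) <= t ^ 2).
  { intros t Ht. destruct (SIN t) as [Hlb _]; [lra | pose proof PI2_1; lra |].
    unfold sin_lb, sin_approx, sin_term in Hlb. simpl in Hlb.
    assert (Hlb' : t - t ^ 3 / 6 + t ^ 5 / 120 - t ^ 7 / 5040 <= sin t)
      by (eapply Rle_trans; [|exact Hlb]; right; field).
    assert (Hub : sin t <= t) by (destruct (Req_dec t 0) as [->|]; [rewrite sin_0; lra |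
                                  apply Rlt_le, sin_lt_x; lra]).
    assert (H5 : 0 <= t ^ 5) by (apply pow_le; lra).
    assert (H7 : t ^ 7 <= t ^ 5).
    { replace (t ^ 7) with (t ^ 5 * t ^ 2) by ring.
      rewrite <- (Rmult_1_r (t ^ 5)) at 2. apply Rmult_le_compat_l; nra. }
    assert (H3 : t ^ 3 <= t ^ 2).
    { replace (t ^ 3) with (t ^ 2 * t) by ring.
      rewrite <- (Rmult_1_r (t ^ 2)) at 2. apply Rmult_le_compat_l; nra. }
    pose proof (pow2_ge_0 t). apply Rabs_le. split; lra. }
  intros Hy. destruct (Rle_dec 0 y) as [Hy0 | Hy0].
  - apply Hpos. apply Rabs_le_between in Hy. lra.
  - replace (sin y - y) with (- (sin (- y) - - y)) by (rewrite sin_neg; ring).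
    rewrite Rabs_Ropp. replace (y ^ 2) with ((- y) ^ 2) by ring.
    apply Hpos. apply Rabs_le_between in Hy. lra.
Qed.

Lemma cos_taylor0 y : Rabs y <= 1 -> Rabs (cos y - 1) <= y ^ 2.
Proof.
  intros Hy. apply Rabs_le_between in Hy. pose proof PI2_1.
  destruct (COS y) as [Hlb _]; [lra | lra |].
  unfold cos_lb, cos_approx, cos_term in Hlb. simpl in Hlb.
  assert (Hlb' : 1 - y ^ 2 / 2 + y ^ 4 / 24 - y ^ 6 / 720 <= cos y)
    by (eapply Rle_trans; [|exact Hlb]; right; field).
  assert (H4 : 0 <= y ^ 4) by (replace (y ^ 4) with ((y ^ 2) ^ 2) by ring; apply pow2_ge_0).
  assert (H6 : y ^ 6 <= y ^ 4).
  { replace (y ^ 6) with (y ^ 4 * y ^ 2) by ring.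
    rewrite <- (Rmult_1_r (y ^ 4)) at 2. apply Rmult_le_compat_l; nra. }
  pose proof (pow2_ge_0 y). pose proof (COS_bound y). apply Rabs_le. split; lra.
Qed.

Lemma ln_succ_sub_bounds x : 0 < x ->
  (ln (x + 1) - ln x) * x <= 1 <= (ln (x + 1) - ln x) * (x + 1).
Proof.
  intros Hx. set (s := ln (x + 1) - ln x).
  assert (Es : exp s = (x + 1) / x)
    by (unfold s, Rminus; rewrite exp_plus, exp_Ropp, !exp_ln by lra; field; lra).
  pose proof (exp_ineq1_le s) as Hup. pose proof (exp_ineq1_le (- s)) as Hlow.
  rewrite exp_Ropp, Es in Hlow. rewrite Es in Hup.
  apply (Rmult_le_compat_r x) in Hup; [|lra].
  apply (Rmult_le_compat_r (x + 1)) in Hlow; [|lra].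
  replace ((x + 1) / x * x) with (x + 1) in Hup by (field; lra).
  replace (/ ((x + 1) / x) * (x + 1)) with x in Hlow by (field; lra).
  split; lra.
Qed.

(** * Limits of complex sequences *)

Definition is_lim_cseq (u : nat -> C) (L : C) : Prop :=
  is_lim_seq (fun n => Re (u n)) (Re L) /\ is_lim_seq (fun n => Im (u n)) (Im L).

Lemma is_lim_seq_telescoping (x phi : nat -> R) :
  (forall m, Rabs (x (S m) - x m) <= phi m - phi (S m)) -> is_lim_seq phi 0 ->
  exists l : R, is_lim_seq x l /\ Rabs (l - x O) <= phi O.
Proof.
  intros Hx Hphi.
  set (lo := fun m => x m - phi m). set (hi := fun m => x m + phi m).
  assert (Hlo : forall m, lo m <= lo (S m))
    by (intros m; unfold lo; pose proof (proj1 (Rabs_le_between _ _) (Hx m)); lra).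
  assert (Hhi : forall m, hi (S m) <= hi m)
    by (intros m; unfold hi; pose proof (proj1 (Rabs_le_between _ _) (Hx m)); lra).
  assert (Hphi2 : is_lim_seq (fun m => hi m - lo m) 0).
  { apply (is_lim_seq_ext (fun m => 2 * phi m)); [intros m; unfold lo, hi; ring|].
    replace (Finite 0) with (Rbar_mult 2 0) by (simpl; f_equal; ring).
    now apply is_lim_seq_scal_l. }
  destruct (ex_lim_seq_adj lo hi Hlo Hhi Hphi2) as [[l Hl] _].
  assert (Hxl : is_lim_seq x l).
  { eapply is_lim_seq_ext with (u := fun m => lo m + phi m); [intros; unfold lo; ring|].
    replace (Finite l) with (Finite (l + 0)) by (f_equal; ring).
    now apply is_lim_seq_plus'. }
  assert (Hhil : is_lim_seq hi l).
  { replace (Finite l) with (Finite (l + 0)) by (f_equal; ring).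
    now apply is_lim_seq_plus'. }
  assert (Hlo0 : forall m, lo O <= lo m)
    by (induction m; [lra | eapply Rle_trans; [exact IHm | apply Hlo]]).
  assert (Hhi0 : forall m, hi m <= hi O)
    by (induction m; [lra | eapply Rle_trans; [apply Hhi | exact IHm]]).
  pose proof (is_lim_seq_le _ _ _ _ Hlo0 (is_lim_seq_const (lo O)) Hl) as B1.
  pose proof (is_lim_seq_le _ _ _ _ Hhi0 Hhil (is_lim_seq_const (hi O))) as B2.
  simpl in B1, B2. unfold lo, hi in B1, B2.
  exists l. split; [exact Hxl|]. apply Rabs_le. lra.
Qed.

Lemma is_lim_cseq_telescoping (g : nat -> C) (phi : nat -> R) :
  (forall m, Cmod (g (S m) - g m) <= phi m - phi (S m)) -> is_lim_seq phi 0 ->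
  exists L, is_lim_cseq g L
            /\ Rabs (Re L - Re (g O)) <= phi O /\ Rabs (Im L - Im (g O)) <= phi O.
Proof.
  intros Hg Hphi.
  destruct (is_lim_seq_telescoping (fun m => Re (g m)) phi) as [a [Ha Ba]]; [|exact Hphi|].
  { intros m. eapply Rle_trans; [|apply Hg].
    replace (Re (g (S m)) - Re (g m)) with (Re (g (S m) - g m)) by (unfold Re; simpl; ring).
    apply re_le_Cmod. }
  destruct (is_lim_seq_telescoping (fun m => Im (g m)) phi) as [b [Hb Bb]]; [|exact Hphi|].
  { intros m. eapply Rle_trans; [|apply Hg].
    replace (Im (g (S m)) - Im (g m)) with (Im (g (S m) - g m)) by (unfold Im; simpl; ring).
    apply im_le_Cmod. }
  exists (a, b). repeat split; assumption.
Qed.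

Lemma is_lim_cseq_mult (u v : nat -> C) (A B : C) :
  is_lim_cseq u A -> is_lim_cseq v B -> is_lim_cseq (fun n => u n * v n)%C (A * B)%C.
Proof.
  intros [Hu1 Hu2] [Hv1 Hv2]. split; simpl.
  - apply is_lim_seq_minus'; apply is_lim_seq_mult'; assumption.
  - apply is_lim_seq_plus'; apply is_lim_seq_mult'; assumption.
Qed.

Lemma is_lim_cseq_Cmod (u : nat -> C) (L : C) (e : nat -> R) :
  (forall n, Cmod (u n - L) <= e n) -> is_lim_seq e 0 -> is_lim_cseq u L.
Proof.
  intros Hb He.
  assert (Hsq : forall l : R, is_lim_seq (fun n => l - e n) l /\ is_lim_seq (fun n => l + e n) l).
  { intros l. split.
    - replace (Finite l) with (Finite (l - 0)) by (f_equal; ring).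
      apply is_lim_seq_minus'; [apply is_lim_seq_const | exact He].
    - replace (Finite l) with (Finite (l + 0)) by (f_equal; ring).
      apply is_lim_seq_plus'; [apply is_lim_seq_const | exact He]. }
  split.
  - apply (is_lim_seq_le_le (fun n => Re L - e n) _ (fun n => Re L + e n)); try apply Hsq.
    intros n. pose proof (Rle_trans _ _ _ (re_le_Cmod (u n - L)) (Hb n)) as Hn.
    apply Rabs_le_between in Hn. unfold Re in *. simpl in Hn. lra.
  - apply (is_lim_seq_le_le (fun n => Im L - e n) _ (fun n => Im L + e n)); try apply Hsq.
    intros n. pose proof (Rle_trans _ _ _ (im_le_Cmod (u n - L)) (Hb n)) as Hn.
    apply Rabs_le_between in Hn. unfold Im in *. simpl in Hn. lra.
Qed.

Lemma is_lim_cseq_ext_loc (u v : nat -> C) (L : C) (N : nat) :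
  (forall n, (N <= n)%nat -> u n = v n) -> is_lim_cseq u L -> is_lim_cseq v L.
Proof.
  intros Huv [HRe HIm]. split; eapply is_lim_seq_ext_loc; try eassumption;
    exists N; intros n Hn; now rewrite Huv.
Qed.

Lemma is_lim_seq_inv_INR_add (N : nat) : is_lim_seq (fun m => / INR (N + m)) 0.
Proof.
  apply (is_lim_seq_ext (fun m => / INR (m + N))); [intros m; now rewrite Nat.add_comm|].
  apply (is_lim_seq_incr_n (fun m => / INR m) N).
  replace (Finite 0) with (Rbar_inv p_infty) by reflexivity.
  apply is_lim_seq_inv; [apply is_lim_seq_INR | discriminate].
Qed.

Lemma growth_factor_le (K a : R) : 0 < a ->
  (1 + K / (a * (a + 1))) * (1 - K / a) <= 1 - K / (a + 1).
Proof.
  intros Ha. apply (Rmult_le_reg_r (a * a * (a + 1))); [nra|].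
  replace ((1 + K / (a * (a + 1))) * (1 - K / a) * (a * a * (a + 1)))
    with ((a * (a + 1) + K) * (a - K)) by (field; lra).
  replace ((1 - K / (a + 1)) * (a * a * (a + 1))) with (a * a * (a + 1 - K))
    by (field; lra).
  nra.
Qed.

Lemma Cmod_close_neq0 (L w : C) (e : R) :
  Rabs (Re L - Re w) <= e -> Rabs (Im L - Im w) <= e -> 2 * e < Cmod w -> L <> 0%C.
Proof.
  intros HRe HIm Hw HL. rewrite HL, re_RtoC, Rminus_0_l, Rabs_Ropp in HRe.
  rewrite HL, im_RtoC, Rminus_0_l, Rabs_Ropp in HIm.
  pose proof (Cmod_le_Re_Im w). lra.
Qed.

Section RatioCriterion.

Variables (g : nat -> C) (K : R).
Hypothesis HK : 0 <= K.

Lemma Cmod_growth_bound (N : nat) : (1 <= N)%nat -> 2 * K <= INR N ->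
  (forall n, (N <= n)%nat -> Cmod (g (S n) - g n) <= K / (INR n * INR (S n)) * Cmod (g n)) ->
  forall m, Cmod (g (N + m)%nat) <= 2 * Cmod (g N).
Proof.
  intros HN HKN Hg.
  assert (HN0 : 1 <= INR N) by (apply (le_INR 1); exact HN).
  set (c := 1 - K / INR N).
  assert (Hc : 1 / 2 <= c <= 1).
  { unfold c. pose proof (Rdiv_le_0_compat K (INR N) HK ltac:(lra)).
    assert (K / INR N <= 1 / 2) by (apply Rle_div_l; lra). lra. }
  pose proof (Cmod_ge_0 (g N)) as HG.
  (* [|g n| / (1 - K / n)] does not increase from [n = N] on. *)
  assert (Hinv : forall m, Cmod (g (N + m)%nat) * c <= Cmod (g N) * (1 - K / INR (N + m))).
  { induction m as [|m IH]; [rewrite Nat.add_0_r; unfold c; lra|].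
    replace (N + S m)%nat with (S (N + m)) by lia.
    rewrite S_INR. set (a := INR (N + m)) in *.
    assert (Ha : INR N <= a) by (apply le_INR; lia).
    assert (Hstep : Cmod (g (S (N + m))) <= (1 + K / (a * (a + 1))) * Cmod (g (N + m)%nat)).
    { replace (g (S (N + m))) with (g (N + m)%nat + (g (S (N + m)) - g (N + m)%nat))%C
        by ring.
      eapply Rle_trans; [apply Cmod_triangle|].
      pose proof (Hg (N + m)%nat ltac:(lia)) as Hd. rewrite S_INR in Hd. fold a in Hd. lra. }
    assert (HKa : K / a <= K / INR N)
      by (apply Rmult_le_compat_l; [lra | apply Rinv_le_contravar; lra]).
    assert (0 <= K / (a * (a + 1))) by (apply Rdiv_le_0_compat; nra).
    pose proof (growth_factor_le K a ltac:(lra)) as Hfac.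
    apply Rle_trans with ((1 + K / (a * (a + 1))) * (Cmod (g N) * (1 - K / a))).
    - apply Rle_trans with ((1 + K / (a * (a + 1))) * (Cmod (g (N + m)%nat) * c)).
      + rewrite <- Rmult_assoc. apply Rmult_le_compat_r; lra.
      + apply Rmult_le_compat_l; lra.
    - rewrite Rmult_comm, Rmult_assoc. apply Rmult_le_compat_l; [exact HG|].
      rewrite Rmult_comm. exact Hfac. }
  intros m. specialize (Hinv m).
  assert (0 <= K / INR (N + m)) by (apply Rdiv_le_0_compat; [exact HK | apply lt_0_INR; lia]).
  assert (Cmod (g N) * (1 - K / INR (N + m)) <= Cmod (g N)) by nra.
  pose proof (Cmod_ge_0 (g (N + m)%nat)). nra.
Qed.

Lemma is_lim_cseq_ratio (N0 : nat) :
  (forall n, (N0 <= n)%nat -> Cmod (g (S n) - g n) <= K / (INR n * INR (S n)) * Cmod (g n)) ->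
  (forall n, (1 <= n)%nat -> g n <> 0%C) ->
  exists L : C, L <> 0%C /\ is_lim_cseq g L.
Proof.
  intros Hg Hnz.
  (* Once [8 K <= N], the sequence moves by at most [|g N| / 2] after [N]. *)
  destruct (INR_unbounded (8 * K)) as [N1 HN1].
  set (N := (N1 + N0 + 1)%nat).
  assert (HNK : 8 * K <= INR N) by (pose proof (le_INR N1 N ltac:(unfold N; lia)); lra).
  assert (HNpos : 0 < INR N) by (apply lt_0_INR; unfold N; lia).
  set (G := Cmod (g N)).
  assert (HG : 0 < G) by (apply Cmod_gt_0, Hnz; unfold N; lia).
  assert (Hbound : forall m, Cmod (g (N + m)%nat) <= 2 * G)
    by (apply Cmod_growth_bound; [unfold N; lia | lra | intros n Hn; apply Hg; unfold N in *; lia]).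
  set (phi := fun m => K * (2 * G) / INR (N + m)).
  assert (Hphi : is_lim_seq phi 0).
  { unfold phi. replace (Finite 0) with (Rbar_mult (K * (2 * G)) 0) by (simpl; f_equal; ring).
    apply is_lim_seq_scal_l, is_lim_seq_inv_INR_add. }
  assert (Hdiff : forall m, Cmod (g (N + S m)%nat - g (N + m)%nat) <= phi m - phi (S m)).
  { intros m. unfold phi. replace (N + S m)%nat with (S (N + m)) by lia.
    rewrite S_INR. set (a := INR (N + m)).
    assert (Ha : 0 < a) by (apply lt_0_INR; unfold N; lia).
    replace (K * (2 * G) / a - K * (2 * G) / (a + 1)) with (K / (a * (a + 1)) * (2 * G))
      by (field; lra).
    eapply Rle_trans; [apply Hg; unfold N; lia|]. rewrite S_INR. fold a.
    apply Rmult_le_compat_l; [apply Rdiv_le_0_compat; nra | apply Hbound]. }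
  destruct (is_lim_cseq_telescoping (fun m => g (N + m)%nat) phi Hdiff Hphi)
    as [L [[HRe HIm] [BRe BIm]]].
  unfold phi in BRe, BIm. rewrite !Nat.add_0_r in BRe, BIm.
  exists L. split.
  - apply (Cmod_close_neq0 L (g N) (K * (2 * G) / INR N)); [exact BRe | exact BIm |].
    fold G. apply Rmult_lt_reg_r with (INR N); [exact HNpos|].
    replace (2 * (K * (2 * G) / INR N) * INR N) with (4 * K * G) by (field; lra). nra.
  - split; apply (is_lim_seq_incr_n _ N);
      [eapply is_lim_seq_ext; [|exact HRe] | eapply is_lim_seq_ext; [|exact HIm]];
      intros m; simpl; now rewrite Nat.add_comm.
Qed.

End RatioCriterion.

(** * Gauss' limit formula *)

Definition cexp (w : C) : C := (exp (Re w) * cos (Im w), exp (Re w) * sin (Im w)).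

Lemma cexp_plus w1 w2 : cexp (w1 + w2) = (cexp w1 * cexp w2)%C.
Proof.
  destruct w1 as [a1 b1], w2 as [a2 b2]. unfold cexp, Re, Im. simpl.
  rewrite exp_plus, cos_plus, sin_plus. apply injective_projections; simpl; ring.
Qed.

Lemma cexp_RtoC x : cexp (RtoC x) = RtoC (exp x).
Proof.
  unfold cexp, Re, Im. simpl. rewrite cos_0, sin_0.
  apply injective_projections; simpl; ring.
Qed.

Lemma cexp_neq0 w : cexp w <> 0%C.
Proof.
  intros E. apply C1_nz.
  rewrite <- exp_0, <- cexp_RtoC, <- (Cplus_opp_r w), cexp_plus, E. ring.
Qed.

Lemma cpow_cexp a z : cpow a z = cexp (z * ln a).
Proof.
  unfold cpow, cexp. rewrite re_scal_r, im_scal_r.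
  apply injective_projections; simpl; ring.
Qed.

Lemma cexp_taylor1 w : Rabs (Re w) <= 1 / 2 -> Rabs (Im w) <= 1 ->
  Cmod (cexp w - 1 - w) <= 5 * Cmod w ^ 2.
Proof.
  intros Hx Hy. rewrite Cmod2_alt. eapply Rle_trans; [apply Cmod_le_Re_Im|].
  destruct w as [x y]. change (Re (x, y)) with x in *. change (Im (x, y)) with y in *.
  replace (Re (cexp (x, y) - 1 - (x, y))%C)
    with ((exp x - 1 - x) + exp x * (cos y - 1)) by (unfold cexp; simpl; ring).
  replace (Im (cexp (x, y) - 1 - (x, y))%C)
    with (exp x * (sin y - y) + (exp x - 1) * y) by (unfold cexp; simpl; ring).
  pose proof (exp_taylor1 x Hx) as [He0 He1]. pose proof (exp_pos x) as Hepos.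
  pose proof (sin_taylor1 y Hy) as Hsin. pose proof (cos_taylor0 y Hy) as Hcos.
  set (e := exp x) in *.
  apply Rabs_le_between in Hx.
  assert (He2 : e <= 2) by nra.
  assert (He3 : Rabs (e - 1) <= 2 * Rabs x)
    by (apply Rabs_le; destruct (Rle_dec 0 x); [rewrite Rabs_pos_eq | rewrite Rabs_left]; nra).
  assert (Hxy : 2 * Rabs x * Rabs y <= x ^ 2 + y ^ 2).
  { rewrite <- (pow2_abs x), <- (pow2_abs y). pose proof (pow2_ge_0 (Rabs x - Rabs y)). nra. }
  pose proof (Rabs_pos (cos y - 1)). pose proof (Rabs_pos (sin y - y)).
  pose proof (Rabs_pos x). pose proof (Rabs_pos y).
  assert (Hre : Rabs ((e - 1 - x) + e * (cos y - 1)) <= 2 * x ^ 2 + 2 * y ^ 2).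
  { eapply Rle_trans; [apply Rabs_triang|].
    rewrite Rabs_mult, (Rabs_pos_eq e), (Rabs_pos_eq (e - 1 - x)) by lra. nra. }
  assert (Him : Rabs (e * (sin y - y) + (e - 1) * y) <= 2 * y ^ 2 + 2 * Rabs x * Rabs y).
  { eapply Rle_trans; [apply Rabs_triang|].
    rewrite !Rabs_mult, (Rabs_pos_eq e) by lra. nra. }
  pose proof (pow2_ge_0 x). lra.
Qed.

Lemma cprod_S f m : cprod f (S m) = (cprod f m * f m)%C.
Proof.
  unfold cprod. rewrite seq_S, fold_right_app. simpl.
  assert (Hacc : forall l a, fold_right (fun k acc => (f k * acc)%C) a l
                             = (fold_right (fun k acc => (f k * acc)%C) 1 l * a)%C).
  { induction l as [|x l IH]; intros a; simpl; [ring | rewrite IH; ring]. }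
  rewrite Hacc. ring.
Qed.

Lemma cprod_poch z m : cprod (fun j => z + INR j)%C m = poch z m.
Proof.
  induction m as [|m IH]; [reflexivity|]. now rewrite cprod_S, IH.
Qed.

Lemma gauss_seq_poch z n :
  gauss_seq z n = (INR (fact n) * cpow (INR n) z / poch z (S n))%C.
Proof. unfold gauss_seq. now rewrite cprod_poch. Qed.

Lemma gauss_seq_neq0 z n : 0 < Re z -> gauss_seq z n <> 0%C.
Proof.
  intros Hz. rewrite gauss_seq_poch, cpow_cexp.
  apply Cdiv_neq0; [apply Cmult_neq_0; [|apply cexp_neq0] |].
  - intros E. apply RtoC_inj in E. now apply (INR_fact_neq_0 n).
  - apply poch_neq0. intros j. now apply Cplus_INR_neq0.
Qed.

Lemma gauss_seq_S z n : 0 < Re z ->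
  gauss_seq z (S n) = (gauss_seq z n * (INR (S n)
                        * cexp (z * RtoC (ln (INR (S n)) - ln (INR n))) / (z + INR (S n))))%C.
Proof.
  intros Hz. rewrite !gauss_seq_poch, (poch_S z (S n)), fact_simpl, mult_INR, RtoC_mult,
    !cpow_cexp.
  replace (z * ln (INR (S n)))%C
    with (z * ln (INR n) + z * RtoC (ln (INR (S n)) - ln (INR n)))%C
    by (rewrite RtoC_minus; ring).
  rewrite cexp_plus.
  assert (Hp : poch z (S n) <> 0%C) by (apply poch_neq0; intros; now apply Cplus_INR_neq0).
  pose proof (Cplus_INR_neq0 z (S n) Hz).
  field. split; assumption.
Qed.

Lemma gauss_seq_succ_arg z n : 0 < Re z -> (1 <= n)%nat ->
  gauss_seq (z + 1) n = (gauss_seq z n * (z * INR n / (z + INR (S n))))%C.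
Proof.
  intros Hz Hn. rewrite !gauss_seq_poch, !cpow_cexp.
  replace ((z + 1) * ln (INR n))%C with (z * ln (INR n) + ln (INR n))%C by ring.
  rewrite cexp_plus, cexp_RtoC, exp_ln by (apply lt_0_INR; lia).
  assert (Hz0 : z <> 0%C) by (intros E; rewrite E in Hz; simpl in Hz; lra).
  assert (Hp : poch z (S n) <> 0%C) by (apply poch_neq0; intros; now apply Cplus_INR_neq0).
  pose proof (Cplus_INR_neq0 z (S n) Hz).
  assert (Hp1 : poch (z + 1) (S n) = (poch z (S n) * (z + INR (S n)) / z)%C)
    by (rewrite <- poch_S, (poch_Sl z (S n)); field; exact Hz0).
  rewrite Hp1. field. repeat split; assumption.
Qed.

Lemma Cmod_ratio_sub1 (z E : C) (x s : R) : 0 < Re z -> 0 <= x -> 1 <= s * (x + 1) ->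
  Cmod (RtoC (x + 1) * E / (z + RtoC (x + 1)) - 1)%C
  <= Cmod (E - 1 - z * s) + Cmod z * (s * (x + 1) - 1) / (x + 1).
Proof.
  intros Hz Hx Hs.
  assert (Hden : x + 1 <= Cmod (z + RtoC (x + 1))).
  { eapply Rle_trans; [|apply re_le_Cmod].
    replace (Re (z + RtoC (x + 1))) with (Re z + (x + 1)) by (unfold Re; simpl; ring).
    rewrite Rabs_pos_eq; lra. }
  assert (Hnz : (z + RtoC (x + 1))%C <> 0%C) by (intros E0; rewrite E0, Cmod_0 in Hden; lra).
  replace (RtoC (x + 1) * E / (z + RtoC (x + 1)) - 1)%C
    with ((RtoC (x + 1) * (E - 1 - z * s) + z * RtoC (s * (x + 1) - 1)) / (z + RtoC (x + 1)))%C
    by (rewrite RtoC_minus, RtoC_mult; field; exact Hnz).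
  rewrite Cmod_div by exact Hnz. unfold Rdiv.
  apply Rle_trans with ((Cmod (E - 1 - z * s) * (x + 1) + Cmod z * (s * (x + 1) - 1)) / (x + 1)).
  - apply Rmult_le_compat; [apply Cmod_ge_0 | apply Rlt_le, Rinv_0_lt_compat; lra | |
                            apply Rinv_le_contravar; lra].
    eapply Rle_trans; [apply Cmod_triangle|].
    rewrite !Cmod_mult, !Cmod_R, !Rabs_pos_eq by lra. lra.
  - right. field. lra.
Qed.

Lemma gauss_ratio_estimate (z : C) (x s : R) : 0 < Re z -> 1 <= x -> 2 * Cmod z <= x ->
  s * x <= 1 <= s * (x + 1) ->
  Cmod (RtoC (x + 1) * cexp (z * s) / (z + RtoC (x + 1)) - 1)%C
  <= (10 * Cmod z ^ 2 + Cmod z) / (x * (x + 1)).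
Proof.
  intros Hz Hx1 Hxz [Hsx Hsx1].
  assert (Hs0 : 0 < s) by nra.
  assert (Hs1 : s <= 1) by nra.
  pose proof (Cmod_ge_0 z) as Hz0.
  assert (Hzs_eq : Cmod (z * s) = Cmod z * s)
    by (rewrite Cmod_mult, Cmod_R, Rabs_pos_eq; lra).
  assert (Hzs : Cmod (z * s) <= 1 / 2) by (rewrite Hzs_eq; nra).
  assert (HE : Cmod (cexp (z * s) - 1 - z * s) <= 5 * (Cmod z * s) ^ 2).
  { rewrite <- Hzs_eq.
    apply cexp_taylor1; eapply Rle_trans; [apply re_le_Cmod | lra | apply im_le_Cmod | lra]. }
  eapply Rle_trans; [apply (Cmod_ratio_sub1 _ _ x s); lra|].
  apply Rle_div_r; [nra|].
  replace ((Cmod (cexp (z * s) - 1 - z * s) + Cmod z * (s * (x + 1) - 1) / (x + 1))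
           * (x * (x + 1)))
    with (Cmod (cexp (z * s) - 1 - z * s) * (x * (x + 1)) + Cmod z * ((s * (x + 1) - 1) * x))
    by (field; lra).
  assert (Hq1 : (Cmod z * s) ^ 2 * (x * (x + 1)) <= Cmod z ^ 2 * 2).
  { replace ((Cmod z * s) ^ 2 * (x * (x + 1))) with (Cmod z ^ 2 * ((s * x) * (s * (x + 1))))
      by ring.
    pose proof (pow2_ge_0 (Cmod z)). apply Rmult_le_compat_l; [lra|].
    apply Rle_trans with (1 * 2); [apply Rmult_le_compat; nra | lra]. }
  assert (Hq2 : Cmod z * ((s * (x + 1) - 1) * x) <= Cmod z)
    by (rewrite <- (Rmult_1_r (Cmod z)) at 2; apply Rmult_le_compat_l; nra).
  assert (Hq3 : Cmod (cexp (z * s) - 1 - z * s) * (x * (x + 1))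
                <= 5 * (Cmod z * s) ^ 2 * (x * (x + 1)))
    by (apply Rmult_le_compat_r; nra).
  lra.
Qed.

Lemma gauss_seq_cvg (z : C) : 0 < Re z ->
  exists L : C, L <> 0%C /\ is_lim_cseq (gauss_seq z) L.
Proof.
  intros Hz. pose proof (Cmod_ge_0 z) as Hz0.
  destruct (INR_unbounded (2 * Cmod z + 1)) as [N0 HN0].
  assert (HK : 0 <= 10 * Cmod z ^ 2 + Cmod z) by (pose proof (pow2_ge_0 (Cmod z)); lra).
  apply (is_lim_cseq_ratio _ _ HK N0).
  - intros n Hn. pose proof (le_INR _ _ Hn) as Hx.
    rewrite gauss_seq_S by exact Hz.
    set (rho := (INR (S n) * cexp (z * RtoC (ln (INR (S n)) - ln (INR n)))
                 / (z + INR (S n)))%C).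
    replace (gauss_seq z n * rho - gauss_seq z n)%C with (gauss_seq z n * (rho - 1))%C by ring.
    rewrite Cmod_mult, Rmult_comm. apply Rmult_le_compat_r; [apply Cmod_ge_0|].
    unfold rho. rewrite !S_INR.
    apply gauss_ratio_estimate; [exact Hz | lra | lra | apply ln_succ_sub_bounds; lra].
  - intros n _. now apply gauss_seq_neq0.
Qed.

Lemma CGamma_is_lim (z L : C) : is_lim_cseq (gauss_seq z) L -> CGamma z = L.
Proof.
  intros [HRe HIm]. unfold CGamma.
  rewrite (is_lim_seq_unique _ _ HRe), (is_lim_seq_unique _ _ HIm).
  destruct L. reflexivity.
Qed.

Lemma CGamma_neq0 (z : C) : 0 < Re z -> CGamma z <> 0%C.
Proof.
  intros Hz. destruct (gauss_seq_cvg z Hz) as [L [HL Hlim]].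
  now rewrite (CGamma_is_lim _ _ Hlim).
Qed.

Lemma CGamma_S (z : C) : 0 < Re z -> CGamma (z + 1) = (z * CGamma z)%C.
Proof.
  intros Hz. destruct (gauss_seq_cvg z Hz) as [L [_ HL]].
  rewrite (CGamma_is_lim z L HL). apply CGamma_is_lim.
  set (h := fun n : nat => (z * INR n / (z + INR (S n)))%C).
  assert (Hh : is_lim_cseq h z).
  { apply (is_lim_cseq_Cmod _ _ (fun n => Cmod z * Cmod (z + 1) * / INR (1 + n))).
    - intros n. unfold h. pose proof (Cplus_INR_neq0 z (S n) Hz) as Hnz.
      replace (z * INR n / (z + INR (S n)) - z)%C with (- (z * (z + 1)) / (z + INR (S n)))%C
        by (rewrite S_INR, RtoC_plus; rewrite S_INR, RtoC_plus in Hnz; field; exact Hnz).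
      rewrite Cmod_div, Cmod_opp, Cmod_mult by exact Hnz.
      assert (Hd : INR (1 + n) <= Cmod (z + INR (S n))).
      { eapply Rle_trans; [|apply re_le_Cmod].
        replace (Re (z + INR (S n))) with (Re z + INR (S n)) by (unfold Re; simpl; ring).
        pose proof (pos_INR (S n)). rewrite Rabs_pos_eq; simpl (1 + n)%nat; lra. }
      assert (0 < INR (1 + n)) by (apply lt_0_INR; lia).
      unfold Rdiv. apply Rmult_le_compat_l; [apply Rmult_le_pos; apply Cmod_ge_0|].
      apply Rinv_le_contravar; lra.
    - replace (Finite 0) with (Rbar_mult (Cmod z * Cmod (z + 1)) 0) by (simpl; f_equal; ring).
      apply is_lim_seq_scal_l, is_lim_seq_inv_INR_add. }
  replace (z * L)%C with (L * z)%C by ring.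
  apply (is_lim_cseq_ext_loc (fun n => gauss_seq z n * h n)%C _ _ 1).
  - intros n Hn. unfold h. symmetry. now apply gauss_seq_succ_arg.
  - now apply is_lim_cseq_mult.
Qed.

Lemma CGamma_plus_nat (z : C) k : 0 < Re z -> CGamma (z + INR k) = (poch z k * CGamma z)%C.
Proof.
  intros Hz. induction k as [|k IH].
  - simpl poch. rewrite Cplus_0_r. ring.
  - replace (z + INR (S k))%C with (z + INR k + 1)%C by (rewrite S_INR, RtoC_plus; ring).
    rewrite CGamma_S, IH, poch_S; [ring|].
    unfold Re in *. simpl. pose proof (pos_INR k). lra.
Qed.

(** * Quotients of Gamma-binomials *)

Lemma CGamma_eq_poch (z w : C) k : 0 < Re z -> w = (z + INR k)%C ->
  CGamma w = (poch z k * CGamma z)%C.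
Proof. intros Hz ->. now apply CGamma_plus_nat. Qed.

Lemma RtoC_INR_double k : RtoC (INR (2 * k)) = (2 * INR k)%C.
Proof. rewrite mult_INR, RtoC_mult. reflexivity. Qed.

Lemma poch_double (w : C) k :
  poch w (2 * k) = (RtoC (2 ^ (2 * k)) * poch (w / 2) k * poch (w / 2 + 1 / 2) k)%C.
Proof.
  induction k as [|k IH]; [simpl; ring|].
  replace (2 * S k)%nat with (S (S (2 * k))) by lia.
  rewrite !poch_S, IH, S_INR, !RtoC_plus, RtoC_INR_double.
  change (2 ^ S (S (2 * k))) with (2 * (2 * 2 ^ (2 * k))). rewrite !RtoC_mult.
  field.
Qed.

Lemma cbinom_quotient_poch (x y : C) k : -1 < Re x -> -1 < Re y ->
  (cbinom (INR (2 * k) + x) ((INR (2 * k) + x) / 2)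
     / cbinom ((INR (2 * k) + x + y) / 2) (y / 2) * RtoC (/ 2 ^ (2 * k)))%C
  = (cbinom x (x / 2) / cbinom ((x + y) / 2) (y / 2)
     * (poch ((x + 1) / 2) k / poch ((x + y) / 2 + 1) k))%C.
Proof.
  intros Hx Hy. unfold cbinom.
  assert (Hx1 : 0 < Re (x + 1)) by re_lra.
  assert (Hx2 : 0 < Re (x / 2 + 1)) by re_lra.
  assert (Hy2 : 0 < Re (y / 2 + 1)) by re_lra.
  assert (Hxy : 0 < Re ((x + y) / 2 + 1)) by re_lra.
  rewrite (CGamma_eq_poch (x + 1) _ (2 * k)) by (try rewrite RtoC_INR_double; auto; ring).
  rewrite (CGamma_eq_poch (x / 2 + 1) ((INR (2 * k) + x) / 2 + 1) k)
    by (rewrite ?RtoC_INR_double; auto; field).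
  rewrite (CGamma_eq_poch (x / 2 + 1) (INR (2 * k) + x - (INR (2 * k) + x) / 2 + 1) k)
    by (rewrite ?RtoC_INR_double; auto; field).
  rewrite (CGamma_eq_poch ((x + y) / 2 + 1) ((INR (2 * k) + x + y) / 2 + 1) k)
    by (rewrite ?RtoC_INR_double; auto; field).
  rewrite (CGamma_eq_poch (x / 2 + 1) ((INR (2 * k) + x + y) / 2 - y / 2 + 1) k)
    by (rewrite ?RtoC_INR_double; auto; field).
  rewrite (CGamma_eq_poch (x / 2 + 1) (x - x / 2 + 1) 0) by (auto; simpl; field).
  rewrite (CGamma_eq_poch (x / 2 + 1) ((x + y) / 2 - y / 2 + 1) 0) by (auto; simpl; field).
  rewrite poch_double. replace ((x + 1) / 2 + 1 / 2)%C with (x / 2 + 1)%C by field.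
  pose proof (CGamma_neq0 _ Hx1). pose proof (CGamma_neq0 _ Hx2).
  pose proof (CGamma_neq0 _ Hy2). pose proof (CGamma_neq0 _ Hxy).
  assert (poch (x / 2 + 1) k <> 0%C) by (apply poch_neq0; intros; now apply Cplus_INR_neq0).
  assert (poch ((x + y) / 2 + 1) k <> 0%C)
    by (apply poch_neq0; intros; now apply Cplus_INR_neq0).
  assert (RtoC (2 ^ (2 * k)) <> 0%C)
    by (intros E; apply RtoC_inj in E; revert E; apply pow_nonzero; lra).
  rewrite RtoC_inv by (apply pow_nonzero; lra).
  simpl poch. field. repeat split; assumption.
Qed.

Lemma cbinom_sym (x y : C) : cbinom x y = cbinom x (x - y).
Proof.
  unfold cbinom. replace (x - (x - y))%C with y by ring. f_equal. apply Cmult_comm.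
Qed.

Lemma cbinom_half_ratio_mul (u v : C) : -1 < Re u ->
  (cbinom v (v / 2) / cbinom u (u / 2) * (cbinom u (u / 2) / cbinom ((u + v) / 2) (v / 2))
   = cbinom v (v / 2) / cbinom ((u + v) / 2) (u / 2))%C.
Proof.
  intros Hu.
  assert (Hu0 : cbinom u (u / 2) <> 0%C).
  { unfold cbinom. replace (u - u / 2 + 1)%C with (u / 2 + 1)%C by field.
    apply Cdiv_neq0; [|apply Cmult_neq_0]; apply CGamma_neq0; re_lra. }
  rewrite (cbinom_sym ((u + v) / 2) (u / 2)).
  replace ((u + v) / 2 - u / 2)%C with (v / 2)%C by field.
  unfold Cdiv. rewrite <- Cmult_assoc, (Cmult_assoc (/ _)), Cinv_l, Cmult_1_l by exact Hu0.
  reflexivity.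
Qed.

Lemma alt_sum_cbinom_quotient_H2 n (u v : C) : -1 < Re u -> -1 < Re v ->
  csum (fun k =>
          RtoC ((-1) ^ k * Binomial.C n k * / 2 ^ (2 * k))
          * cbinom (RtoC (INR (2 * k)) + v) ((RtoC (INR (2 * k)) + v) / 2)
          / cbinom ((RtoC (INR (2 * k)) + u + v) / 2) (u / 2)
          * RtoC (H2 k))%C (S n)
  = (cbinom v (v / 2) / cbinom u (u / 2)
       * cbinom (RtoC (INR (2 * n)) + u) ((RtoC (INR (2 * n)) + u) / 2)
       / cbinom ((RtoC (INR (2 * n)) + u + v) / 2) (v / 2)
       * RtoC (/ 2 ^ (2 * n)) * RtoC (H2 n)
     - cbinom v (v / 2) / cbinom u (u / 2)
       * csum (fun k =>
                 RtoC ((H n - H k) / (INR n - INR k))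
                 * cbinom (RtoC (INR (2 * k)) + u) ((RtoC (INR (2 * k)) + u) / 2)
                 * RtoC (/ 2 ^ (2 * k))
                 / cbinom ((RtoC (INR (2 * k)) + u + v) / 2) (v / 2))%C n)%C.
Proof.
  intros Hu Hv.
  pose proof (fun k => cbinom_quotient_poch u v k Hu Hv) as Hqu.
  pose proof (fun k => cbinom_quotient_poch v u k Hv Hu) as Hqv.
  rewrite (Cplus_comm v u) in Hqv.
  set (W := ((u + v) / 2 + 1)%C) in *.
  set (cu := (cbinom u (u / 2) / cbinom ((u + v) / 2) (v / 2))%C) in *.
  set (cv := (cbinom v (v / 2) / cbinom ((u + v) / 2) (u / 2))%C) in *.
  set (c := (cbinom v (v / 2) / cbinom u (u / 2))%C).
  set (b := fun i => (poch ((u + 1) / 2) i / poch W i)%C).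
  assert (Hb : forall k, btransform b k = (poch ((v + 1) / 2) k / poch W k)%C).
  { intros k. unfold b. rewrite btransform_poch_ratio.
    - f_equal. f_equal. unfold W. field.
    - intros j. apply Cplus_INR_neq0. unfold W. re_lra. }
  assert (Hc : (c * cu = cv)%C) by now apply cbinom_half_ratio_mul.
  rewrite (csum_ext _ (fun k => cv * (RtoC ((-1) ^ k * binom n k) * btransform b k
                                      * RtoC (H2 k)))%C).
  - rewrite csum_mult_l, btransform_H2_sum, <- Hc.
    rewrite (csum_ext (fun k => RtoC _ * cbinom _ _ * RtoC _ / cbinom _ _)%C
                      (fun k => cu * (RtoC ((H n - H k) / (INR n - INR k)) * b k))%C).
    + rewrite csum_mult_l. unfold c.
      rewrite (Cmult_div_assoc (_ / _)), <- (Cmult_assoc (_ / _) (_ / _)), Hqu.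
      unfold b. unfold Cdiv. ring.
    + intros k _. rewrite Cmult_mult_div_assoc, Hqu. unfold b, Cdiv. ring.
  - intros k Hk. rewrite <- (Cplus_assoc _ u v), (Cplus_comm u v), Cplus_assoc.
    rewrite binom_C, Hb by lia.
    transitivity (RtoC ((-1) ^ k * Binomial.C n k)
                  * (cbinom (INR (2 * k) + v) ((INR (2 * k) + v) / 2)
                     / cbinom ((INR (2 * k) + v + u) / 2) (u / 2) * RtoC (/ 2 ^ (2 * k)))
                  * RtoC (H2 k))%C;
      [rewrite !RtoC_mult; unfold Cdiv; ring | rewrite Hqv; unfold Cdiv; ring].
Qed.

Theorem theorem36 (n : nat) :
  rsum (fun k => (-1) ^ k * Binomial.C n k * / 2 ^ (2 * k)
                   * Binomial.C (2 * k) k * H2 k)%R (S n)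
  = (Binomial.C (2 * n) n * / 2 ^ (2 * n) * H2 n
     - rsum (fun k => (H n - H k) / (INR n - INR k)
                        * Binomial.C (2 * k) k * / 2 ^ (2 * k))%R n)%R
  /\
  forall u v : C, (-1 < Re u)%R -> (-1 < Re v)%R ->
  csum (fun k =>
          RtoC ((-1) ^ k * Binomial.C n k * / 2 ^ (2 * k))
          * cbinom (RtoC (INR (2 * k)) + v) ((RtoC (INR (2 * k)) + v) / 2)
          / cbinom ((RtoC (INR (2 * k)) + u + v) / 2) (u / 2)
          * RtoC (H2 k))%C (S n)
  = (cbinom v (v / 2) / cbinom u (u / 2)
       * cbinom (RtoC (INR (2 * n)) + u) ((RtoC (INR (2 * n)) + u) / 2)
       / cbinom ((RtoC (INR (2 * n)) + u + v) / 2) (v / 2)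
       * RtoC (/ 2 ^ (2 * n)) * RtoC (H2 n)
     - cbinom v (v / 2) / cbinom u (u / 2)
       * csum (fun k =>
                 RtoC ((H n - H k) / (INR n - INR k))
                 * cbinom (RtoC (INR (2 * k)) + u) ((RtoC (INR (2 * k)) + u) / 2)
                 * RtoC (/ 2 ^ (2 * k))
                 / cbinom ((RtoC (INR (2 * k)) + u + v) / 2) (v / 2))%C n)%C.
Proof.
  split.
  - apply alt_sum_central_binom_H2.
  - intros u v. apply alt_sum_cbinom_quotient_H2.
Qed.
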